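(* Let $R$ be a domain such that $\mathcal I(R)$ is a BF-monoid. Suppose there exist distinct $X_1,X_2\in R\setminus\{0\}$ such that $\mathfrak a_1(X_1,X_2)$, $\mathfrak b_2(X_1,X_2)$, and $\mathfrak c_{2i+1}(X_1,X_2)$ for all $i\in\mathbb N$ are atoms of $\mathcal I(R)$. Then: \begin{enumerate} \item $\mathcal I(R)$ is not a transfer Krull monoid; \item $\mathcal I(R)$ is not locally finitely generated; \item $\mathcal U_k(\mathcal I(R))=\mathbb N_{\ge2}$ for all $k\ge2$. \end{enumerate}
   Context: $\mathcal I(R)$: semigroup of nonzero ideals of $R$ under multiplication. Ideals: $\mathfrak a_1(X_1,X_2)=\langle X_1,X_2\rangle$; $\mathfrak b_2(X_1,X_2)=\langle X_1^2,X_2^2\rangle$; $\mathfrak c_{2i+1}(X_1,X_2)$ is the ideal generated by the monomials $X_1^{2i+1-t}X_2^t$ with $t\in\{0,1,3,5,\dots,2i+1\}$. Monoids are commutative, unit-cancellative, with identity; atoms, $\mathsf L(a)$ (lengths of factorizations into atoms up to units), $\mathcal L(H)$, BF-monoid (all $\mathsf L(a)$ finite nonempty), $\mathcal U_k(H)$ (union of all $L\in\mathcal L(H)$ containing $k$). Locally finitely generated: for every $a$, the submonoid of all divisors of powers of $a$, modulo units, is finitely generated. Transfer homomorphism $\theta:H\to B$: (T1) $B=\theta(H)B^\times$, $\theta^{-1}(B^\times)=H^\times$; (T2) $\theta(u)=bc$ implies $u=vw$ with $\theta(v)\in bB^\times$, $\theta(w)\in cB^\times$. Krull monoid: cancellative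 monoid with a divisor homomorphism into a factorial monoid. Transfer Krull: has a transfer homomorphism to a Krull monoid. *)

From HB Require Import structures.
From mathcomp Require Import all_boot all_algebra.
From Stdlib Require List.

Set Implicit Arguments.
Unset Strict Implicit.
Unset Printing Implicit Defensive.

Import GRing.Theory.
Local Open Scope ring_scope.

Record monoid_struct := MonoidStruct {
  carrier :> Type;
  mop : carrier -> carrier -> carrier;
  mone : carrier }.

Section MonoidNotions.
Variable M : monoid_struct.

Definition is_cmonoid : Prop :=
  (forall a b c : M, mop a (mop b c) = mop (mop a b) c) /\
  (forall a b : M, mop a b = mop b a) /\
  (forall a : M, mop (@mone M) a = a).

Definition is_unit (a : M) : Prop := exists b, mop a b = @mone M.

Definition unit_cancellative : Prop :=
  forall a u : M, (mop a u = a \/ mop u a = a) -> is_unit u.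

Definition cancellative : Prop :=
  forall a b c : M, mop a b = mop a c -> b = c.

Definition divides (a b : M) : Prop := exists c, b = mop a c.

Definition is_atom (a : M) : Prop :=
  ~ is_unit a /\ forall b c : M, a = mop b c -> is_unit b \/ is_unit c.

Definition is_prime (p : M) : Prop :=
  ~ is_unit p /\ forall a b : M, divides p (mop a b) -> divides p a \/ divides p b.

Definition mprod (s : seq M) : M := foldr (@mop M) (@mone M) s.

Definition mpow (a : M) (n : nat) : M := iter n (mop a) (@mone M).

(* k \in L(a): a is (up to a unit) a product of k atoms. *)
Definition lengths (a : M) (k : nat) : Prop :=
  exists s : seq M, size s = k /\ (forall x, List.In x s -> is_atom x) /\
    exists u, is_unit u /\ a = mop u (mprod s).

(* BF-monoid (in the standing setting of unit-cancellative monoids). *)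
Definition BF_monoid : Prop :=
  unit_cancellative /\
  forall a : M, (exists k, lengths a k) /\ (exists N, forall k, lengths a k -> (k <= N)%N).

Definition Uk (k l : nat) : Prop := exists a : M, lengths a k /\ lengths a l.

Definition factorial_monoid : Prop :=
  is_cmonoid /\ cancellative /\
  forall a : M, ~ is_unit a ->
    exists s : seq M, (forall x, List.In x s -> is_prime x) /\ a = mprod s.

(* locally finitely generated: for every a, the divisor-closed submonoid
   [[a]] = {b | b divides some a^n} is finitely generated modulo units. *)
Definition locally_fin_gen : Prop :=
  forall a : M, exists gens : seq M,
    (forall g, List.In g gens -> exists n, divides g (mpow a n)) /\
    forall b : M, (exists n, divides b (mpow a n)) ->
      exists s : seq M, (forall x, List.In x s -> List.In x gens) /\
        exists u, is_unit u /\ b = mop u (mprod s).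
End MonoidNotions.

Definition monoid_hom (H B : monoid_struct) (f : H -> B) : Prop :=
  (forall a b, f (mop a b) = mop (f a) (f b)) /\ f (@mone H) = @mone B.

Definition divisor_hom (H D : monoid_struct) (f : H -> D) : Prop :=
  monoid_hom f /\ forall a b, divides (f a) (f b) -> divides a b.

Definition is_Krull (B : monoid_struct) : Prop :=
  is_cmonoid B /\ cancellative B /\
  exists D : monoid_struct, factorial_monoid D /\ exists f : B -> D, divisor_hom f.

Definition transfer_hom (H B : monoid_struct) (t : H -> B) : Prop :=
  monoid_hom t /\
  (forall b : B, exists a u, is_unit u /\ b = mop (t a) u) /\
  (forall a : H, is_unit (t a) <-> is_unit a) /\
  (forall (u : H) (b c : B), t u = mop b c ->
     exists v w : H, u = mop v w /\
       (exists e, is_unit e /\ t v = mop b e) /\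
       (exists e, is_unit e /\ t w = mop c e)).

Definition transfer_Krull (H : monoid_struct) : Prop :=
  exists B : monoid_struct, is_Krull B /\ exists t : H -> B, transfer_hom t.

Section Ideals.
Variable R : idomainType.

Definition is_ideal (I : R -> Prop) : Prop :=
  I 0 /\ (forall x y, I x -> I y -> I (x + y)) /\ (forall r x, I x -> I (r * x)).

Definition nonzero_ideal (I : R -> Prop) : Prop :=
  is_ideal I /\ exists x, I x /\ x != 0.

Definition ideal_mul (I J : R -> Prop) : R -> Prop := fun x =>
  exists s : seq (R * R), (forall p, p \in s -> I p.1 /\ J p.2) /\
    x = \sum_(p <- s) p.1 * p.2.

Definition ideal_gen (g : seq R) : R -> Prop := fun x =>
  exists s : seq (R * R), (forall p, p \in s -> p.2 \in g) /\
    x = \sum_(p <- s) p.1 * p.2.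

Lemma ideal_mul_nz I J : nonzero_ideal I -> nonzero_ideal J ->
  nonzero_ideal (ideal_mul I J).
Proof.
move=> [[_ [_ IM]] [a [Ia a0]]] [_ [b [Jb b0]]]; split; last first.
  exists (a * b); split; last by rewrite mulf_neq0.
  exists [:: (a, b)]; split; last by rewrite big_seq1.
  by move=> p; rewrite inE => /eqP ->.
split; first by exists [::]; split=> //; rewrite big_nil.
split.
  move=> x y [s [Hs ->]] [t [Ht ->]]; exists (s ++ t); split; last by rewrite big_cat.
  by move=> p; rewrite mem_cat => /orP [/Hs|/Ht].
move=> r x [s [Hs ->]]; exists [seq (r * p.1, p.2) | p <- s]; split.
  by move=> p /mapP [q /Hs [Iq Jq] ->] /=; split=> //; apply: IM.
by rewrite big_map big_distrr /=; apply: eq_bigr => p _; rewrite mulrA.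
Qed.

Lemma ideal_full_nz : nonzero_ideal (fun _ : R => True).
Proof. by split=> //; exists 1; split=> //; apply: oner_neq0. Qed.

Definition nzideal := {I : R -> Prop | nonzero_ideal I}.

Definition nzideal_mul (I J : nzideal) : nzideal :=
  exist _ (ideal_mul (proj1_sig I) (proj1_sig J))
          (ideal_mul_nz (proj2_sig I) (proj2_sig J)).

Definition nzideal_one : nzideal := exist _ (fun _ => True) ideal_full_nz.

(* The monoid I(R) of nonzero ideals under ideal multiplication
   (equality of ideals is equality of subsets, via extensionality). *)
Definition ideal_monoid : monoid_struct :=
  @MonoidStruct nzideal nzideal_mul nzideal_one.

Definition gen_is_atom (g : seq R) : Prop :=
  exists A : ideal_monoid,
    (forall x, proj1_sig A x <-> ideal_gen g x) /\ is_atom A.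

Definition a1_gens (X1 X2 : R) : seq R := [:: X1; X2].
Definition b2_gens (X1 X2 : R) : seq R := [:: X1 ^+ 2; X2 ^+ 2].
Definition c_gens (X1 X2 : R) (i : nat) : seq R :=
  [seq X1 ^+ (i.*2.+1 - t) * X2 ^+ t | t <- 0%N :: [seq j.*2.+1 | j <- iota 0 i.+1]].
End Ideals.

From mathcomp Require Import all_boot all_algebra zify.
From Stdlib Require Import FunctionalExtensionality PropExtensionality ProofIrrelevance.
From Stdlib Require List FinFun.

Set Implicit Arguments.
Unset Strict Implicit.
Unset Printing Implicit Defensive.

Import GRing.Theory.

(* Write a = a_1 = (X1, X2), b = b_2 = (X1^2, X2^2), c_i = c_(2i+1).  All three are
   monomial ideals, the product of monomial ideals is the monomial ideal of the sum of
   the exponent sets, and a^n is generated by all monomials of degree n.  A short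
   computation on exponent sets gives, for p >= 1,
       b a^p = a^(p+2)   and   c_i a^p = a^(2i+1+p).
   The three claims then follow from general facts about commutative monoids:
   - a a a = a b between atoms excludes a transfer homomorphism to a cancellative
     monoid (not_transfer_Krull_of_cube);
   - the atoms c_i are pairwise distinct (powers of a non-unit are distinct in a
     unit-cancellative monoid) and all divide powers of a, so the divisor-closed
     submonoid generated by a is not finitely generated in the reduced monoid I(R)
     (not_locally_fin_gen_of_atoms);
   - for n even and 2 <= m <= n, a^n is the product of the m atoms c_j a^(m-1)
     if n - m = 2j > 0, and of b times a factorization of a^(n-2) of length m-1 if
     n - m is odd (lengths_mpow_a), while in a reduced monoid an element with a
     factorization of length >= 2 has no factorization of length 0 or 1
     (lengths_ge2); hence U_k = N_{>=2} for all k >= 2. *)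

Section CommutativeMonoids.
Variable H : monoid_struct.
Hypothesis H_cmonoid : is_cmonoid H.

Lemma mopA (a b c : H) : mop a (mop b c) = mop (mop a b) c.
Proof. by case: H_cmonoid. Qed.

Lemma mopC (a b : H) : mop a b = mop b a.
Proof. by case: H_cmonoid => _ []. Qed.

Lemma mop1 (a : H) : mop (@mone H) a = a.
Proof. by case: H_cmonoid => _ []. Qed.

Lemma mopr1 (a : H) : mop a (@mone H) = a.
Proof. by rewrite mopC mop1. Qed.

Lemma unit_mone : is_unit (@mone H).
Proof. by exists (@mone H); rewrite mop1. Qed.

Lemma unit_mopl (a b : H) : is_unit (mop a b) -> is_unit a.
Proof. by move=> [c Hc]; exists (mop b c); rewrite mopA. Qed.

Lemma mpowS (a : H) n : mpow a n.+1 = mop a (mpow a n).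
Proof. by []. Qed.

Lemma mpow1 (a : H) : mpow a 1 = a.
Proof. exact: mopr1. Qed.

Lemma mpow_add (a : H) m n : mpow a (m + n) = mop (mpow a m) (mpow a n).
Proof.
by elim: m => [|m IH]; rewrite ?add0n ?mop1 // addSn !mpowS IH mopA.
Qed.

Lemma mpow_inj (a : H) : unit_cancellative H -> ~ is_unit a -> injective (mpow a).
Proof.
move=> ucanc nua.
have neq m d : mpow a m <> mpow a (m + d.+1).
  move=> E; apply/nua/(@unit_mopl a (mpow a d))/(ucanc (mpow a m)).
  by left; rewrite -mpowS -mpow_add -E.
move=> m n E; case: (ltngtP m n) => // [lt_mn|lt_nm].
  by case: (neq m (n - m.+1)); rewrite E; congr mpow; lia.
by case: (neq n (m - n.+1)); rewrite -E; congr mpow; lia.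
Qed.

Lemma lengths_mone : lengths (@mone H) 0.
Proof.
exists [::]; split=> //; split=> //; exists (@mone H).
by split; [exact: unit_mone | rewrite /= mop1].
Qed.

Lemma lengths_mop (x a : H) k : is_atom x -> lengths a k -> lengths (mop x a) k.+1.
Proof.
move=> atx [s [<- [ats [u [unit_u ->]]]]]; exists (x :: s); split=> //; split.
  by move=> y [<-|/ats].
by exists u; split=> //; rewrite /= mopA [mop x u]mopC -mopA.
Qed.

Lemma lengths_mpow (a : H) n : is_atom a -> lengths (mpow a n) n.
Proof. by move=> ata; elim: n => [|n IH]; [exact: lengths_mone | exact: lengths_mop]. Qed.

Section Reduced.
Hypothesis H_reduced : forall u : H, is_unit u -> u = @mone H.

Lemma lengths_reduced (a : H) k : lengths a k ->
  exists s, size s = k /\ (forall x, List.In x s -> is_atom x) /\ a = mprod s.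
Proof.
by move=> [s [sz [ats [u [/H_reduced -> ->]]]]]; exists s; rewrite mop1.
Qed.

Lemma atom_in_factorization (a : H) s : is_atom a -> a = mprod s -> List.In a s.
Proof.
move=> [nua ata]; elim: s => [|g s IH] E; first by case: nua; rewrite E; exact: unit_mone.
have {}E : a = mop g (mprod s) := E.
case: (ata _ _ E) => [/H_reduced g1|/H_reduced s1].
  by right; apply: IH; rewrite E g1 mop1.
by left; rewrite E s1 mopr1.
Qed.

(* An element with a factorization of length at least 2 is neither the identity nor
   an atom, so all its factorizations have length at least 2. *)
Lemma lengths_ge2 (a : H) k l : (2 <= k)%N -> lengths a k -> lengths a l -> (2 <= l)%N.
Proof.
move=> k2 /lengths_reduced [[|x [|y s]] [sz [ats Ea]]]; rewrite -sz // in k2.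
have {}Ea : a = mop x (mop y (mprod s)) := Ea.
have [nux _] := ats x (or_introl erefl).
have [nuy _] := ats y (or_intror (or_introl erefl)).
move=> /lengths_reduced [[|z [|z' t]] [<- [atz Eb]]] //.
  by case: nux; exists (mop y (mprod s)); rewrite -Ea.
have [_ atz'] := atz z (or_introl erefl).
have /atz' : z = mop x (mop y (mprod s)) by rewrite -Ea Eb /= mopr1.
by case=> [//|/unit_mopl].
Qed.

(* If infinitely many pairwise distinct atoms divide powers of one element a, the
   divisor-closed submonoid generated by a is not finitely generated: every atom
   dividing a power of a must belong to any generating set. *)
Lemma not_locally_fin_gen_of_atoms (a : H) (c : nat -> H) :
  injective c -> (forall j, is_atom (c j)) ->
  (forall j, exists n, divides (c j) (mpow a n)) -> ~ locally_fin_gen H.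
Proof.
move=> inj_c atc divc /(_ a) [gens [_ gen_gens]].
have c_in_gens j : List.In (c j) gens.
  have [s [s_gens [u [/H_reduced -> Ec]]]] := gen_gens (c j) (divc j).
  by apply/s_gens/(atom_in_factorization (atc j)); rewrite Ec mop1.
pose cs := List.map c (List.seq 0 (length gens).+1).
have : (length cs <= length gens)%coq_nat.
  apply: List.NoDup_incl_length.
    exact/FinFun.Injective_map_NoDup/List.seq_NoDup.
  by move=> x /List.in_map_iff [j [<- _]]; exact: c_in_gens.
by rewrite List.length_map List.length_seq => /leP; rewrite ltnn.
Qed.
End Reduced.
End CommutativeMonoids.

(* A monoid with atoms a, b satisfying a^3 = a b is not transfer Krull: in the
   cancellative target t(a)^2 = t(b), and (T2) would split the atom b into two
   factors both associated to t(a), hence two non-units. *)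
Lemma not_transfer_Krull_of_cube (H : monoid_struct) (a b : H) :
  is_atom a -> is_atom b -> mop a (mop a a) = mop a b -> ~ transfer_Krull H.
Proof.
move=> [nua _] [_ atb] E [B [[B_cmonoid [B_canc _]] [t [[t_mop _] [_ [t_unit t_T2]]]]]].
have t_b : mop (t a) (t a) = t b by apply: (B_canc (t a)); rewrite -!t_mop E.
have [v [w [Eb [[e [_ t_v]] [e' [_ t_w]]]]]] := t_T2 _ _ _ (esym t_b).
have nu_assoc x e0 : t x = mop (t a) e0 -> ~ is_unit x.
  move=> Etx /t_unit; rewrite Etx => /(unit_mopl B_cmonoid) /t_unit; exact: nua.
by case: (atb _ _ Eb); [exact: nu_assoc t_v | exact: nu_assoc t_w].
Qed.

Section IdealMonoid.
Variable R : idomainType.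
Local Open Scope ring_scope.

Lemma pred_ext (P Q : R -> Prop) : (forall x, P x <-> Q x) -> P = Q.
Proof.
by move=> PQ; apply: functional_extensionality => x; apply: propositional_extensionality.
Qed.

Lemma nzideal_eq (I J : nzideal R) : proj1_sig I = proj1_sig J -> I = J.
Proof. by case: I J => [I HI] [J HJ] /= E; subst J; rewrite (proof_irrelevance _ HI HJ). Qed.

Lemma nzideal_is_ideal (I : nzideal R) : is_ideal (proj1_sig I).
Proof. exact: (proj1 (proj2_sig I)). Qed.

Lemma ideal_gen_is_ideal (g : seq R) : is_ideal (ideal_gen g).
Proof.
split; first by exists [::]; split=> //; rewrite big_nil.
split.
  move=> x y [s [Hs ->]] [t [Ht ->]]; exists (s ++ t); split; last by rewrite big_cat.
  by move=> p; rewrite mem_cat => /orP [/Hs|/Ht].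
move=> r x [s [Hs ->]]; exists [seq (r * p.1, p.2) | p <- s]; split.
  by move=> p /mapP [q /Hs Hq ->].
by rewrite big_map big_distrr /=; apply: eq_bigr => p _; rewrite mulrA.
Qed.

Lemma ideal_gen_mem (g : seq R) z : z \in g -> ideal_gen g z.
Proof.
move=> gz; exists [:: (1, z)]; split; last by rewrite big_seq1 mul1r.
by move=> p; rewrite inE => /eqP ->.
Qed.

Lemma ideal_gen_min (g : seq R) (I : R -> Prop) : is_ideal I ->
  (forall z, z \in g -> I z) -> forall x, ideal_gen g x -> I x.
Proof.
move=> [I0 [ID IM]] gI x [s [Hs ->]]; elim: s Hs => [|p s IH] Hs; first by rewrite big_nil.
rewrite big_cons; apply: ID; last by apply: IH => q Hq; apply: Hs; rewrite inE Hq orbT.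
by apply/IM/gI/Hs; rewrite inE eqxx.
Qed.

Lemma ideal_gen_eq_mem (g g' : seq R) : g =i g' -> ideal_gen g = ideal_gen g'.
Proof.
move=> E; apply: pred_ext => x; split=> [[s [Hs ->]]|[s [Hs ->]]]; exists s; split=> // p /Hs.
  by rewrite E.
by rewrite -E.
Qed.

Lemma ideal_mul_is_ideal (I J : R -> Prop) : is_ideal I -> is_ideal (ideal_mul I J).
Proof.
move=> [_ [_ IM]]; split; first by exists [::]; split=> //; rewrite big_nil.
split.
  move=> x y [s [Hs ->]] [t [Ht ->]]; exists (s ++ t); split; last by rewrite big_cat.
  by move=> p; rewrite mem_cat => /orP [/Hs|/Ht].
move=> r x [s [Hs ->]]; exists [seq (r * p.1, p.2) | p <- s]; split.
  by move=> p /mapP [q /Hs [Iq Jq] ->] /=; split=> //; apply: IM.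
by rewrite big_map big_distrr /=; apply: eq_bigr => p _; rewrite mulrA.
Qed.

Lemma ideal_mul_mem (I J : R -> Prop) u v : I u -> J v -> ideal_mul I J (u * v).
Proof.
move=> Iu Jv; exists [:: (u, v)]; split; last by rewrite big_seq1.
by move=> p; rewrite inE => /eqP ->.
Qed.

Lemma ideal_mul_min (I J K : R -> Prop) : is_ideal K ->
  (forall u v, I u -> J v -> K (u * v)) -> forall x, ideal_mul I J x -> K x.
Proof.
move=> [K0 [KD KM]] IJK x [s [Hs ->]]; elim: s Hs => [|p s IH] Hs; first by rewrite big_nil.
rewrite big_cons; apply: KD; last by apply: IH => q Hq; apply: Hs; rewrite inE Hq orbT.
by have [] := Hs p (mem_head _ _); apply: IJK.
Qed.

(* The two ideal quotients used to bound products by generators. *)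
Lemma ideal_quotient_is_ideal (K T : R -> Prop) : is_ideal K ->
  is_ideal (fun w => forall k, T k -> K (w * k)).
Proof.
move=> [K0 [KD KM]]; split; first by move=> k _; rewrite mul0r.
split; first by move=> x y Hx Hy k Hk; rewrite mulrDl; apply: KD; [apply: Hx|apply: Hy].
by move=> r x Hx k Hk; rewrite -mulrA; apply: KM; apply: Hx.
Qed.

Lemma ideal_preim_mul_is_ideal (K : R -> Prop) z : is_ideal K -> is_ideal (fun k => K (z * k)).
Proof.
move=> [K0 [KD KM]]; split; first by rewrite mulr0.
split; first by move=> x y Hx Hy; rewrite mulrDr; apply: KD.
by move=> r x Hx; rewrite mulrCA; apply: KM.
Qed.

Lemma ideal_gen_mul (g h : seq R) :
  ideal_mul (ideal_gen g) (ideal_gen h) = ideal_gen [seq u * v | u <- g, v <- h].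
Proof.
apply: pred_ext => x; split.
  apply: ideal_mul_min; first exact: ideal_gen_is_ideal.
  move=> u v gu; move: u gu v; apply: ideal_gen_min.
    exact/ideal_quotient_is_ideal/ideal_gen_is_ideal.
  move=> z gz; apply: ideal_gen_min; first exact/ideal_preim_mul_is_ideal/ideal_gen_is_ideal.
  by move=> y hy; apply/ideal_gen_mem/allpairs_f.
apply: ideal_gen_min; first exact/ideal_mul_is_ideal/ideal_gen_is_ideal.
by move=> z /allpairsP [[u v] [/= gu hv ->]]; apply: ideal_mul_mem; apply: ideal_gen_mem.
Qed.

Lemma ideal_monoid_mopE (I J : ideal_monoid R) :
  proj1_sig (mop I J) = ideal_mul (proj1_sig I) (proj1_sig J).
Proof. by []. Qed.

Lemma ideal_mul_comm (I J : ideal_monoid R) x :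
  ideal_mul (proj1_sig I) (proj1_sig J) x -> ideal_mul (proj1_sig J) (proj1_sig I) x.
Proof.
apply: ideal_mul_min; first exact/ideal_mul_is_ideal/nzideal_is_ideal.
by move=> u v Iu Jv; rewrite mulrC; apply: ideal_mul_mem.
Qed.

Lemma ideal_mul_assoc (I J K : ideal_monoid R) :
  ideal_mul (proj1_sig I) (ideal_mul (proj1_sig J) (proj1_sig K)) =
  ideal_mul (ideal_mul (proj1_sig I) (proj1_sig J)) (proj1_sig K).
Proof.
apply: pred_ext => x; split.
  apply: ideal_mul_min; first exact/ideal_mul_is_ideal/ideal_mul_is_ideal/nzideal_is_ideal.
  move=> u w Iu JKw; rewrite mulrC; move: w JKw u Iu.
  apply: ideal_mul_min.
    exact/ideal_quotient_is_ideal/ideal_mul_is_ideal/ideal_mul_is_ideal/nzideal_is_ideal.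
  move=> v k Jv Kk u Iu; rewrite mulrAC [v * u]mulrC.
  by apply: ideal_mul_mem => //; apply: ideal_mul_mem.
apply: ideal_mul_min; first exact/ideal_mul_is_ideal/nzideal_is_ideal.
move=> w k IJw Kk; move: w IJw k Kk.
apply: ideal_mul_min; first exact/ideal_quotient_is_ideal/ideal_mul_is_ideal/nzideal_is_ideal.
move=> u v Iu Jv k Kk; rewrite -mulrA.
by apply: ideal_mul_mem => //; apply: ideal_mul_mem.
Qed.

Lemma ideal_monoid_cmonoid : is_cmonoid (ideal_monoid R).
Proof.
split; first by move=> I J K; apply: nzideal_eq; exact: ideal_mul_assoc.
split; first by move=> I J; apply: nzideal_eq; apply: pred_ext => x; split; apply: ideal_mul_comm.
move=> I; apply: nzideal_eq; apply: pred_ext => x; split.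
  apply: ideal_mul_min; first exact: nzideal_is_ideal.
  by move=> u v _ Iv; have [_ [_ IM]] := nzideal_is_ideal I; apply: IM.
by move=> Ix; rewrite -(mul1r x); apply: ideal_mul_mem.
Qed.

(* I(R) is reduced: if IJ = R then I = R, since IJ is contained in I. *)
Lemma ideal_monoid_reduced (U : ideal_monoid R) : is_unit U -> U = @mone (ideal_monoid R).
Proof.
move=> [V UV]; apply: nzideal_eq; apply: pred_ext => x; split=> // _.
have : proj1_sig (mop U V) x by rewrite UV.
apply: ideal_mul_min; first exact: nzideal_is_ideal.
by move=> u v Uu _; rewrite mulrC; have [_ [_ IM]] := nzideal_is_ideal U; apply: IM.
Qed.
End IdealMonoid.

(* Exponent sets: the pair (u, v) stands for the monomial X1^u X2^v. *)
Definition sumset (S T : seq (nat * nat)) : seq (nat * nat) :=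
  [seq (s.1 + t.1, s.2 + t.2) | s <- S, t <- T].

(* All exponents of total degree n: the monomials generating a_1^n. *)
Definition degree_set (n : nat) : seq (nat * nat) := [seq (n - t, t) | t <- iota 0 n.+1].

Definition b_exps : seq (nat * nat) := [:: (2, 0); (0, 2)].

Definition c_exps (i : nat) : seq (nat * nat) :=
  [seq (i.*2.+1 - t, t) | t <- 0 :: [seq j.*2.+1 | j <- iota 0 i.+1]].

Lemma mem_sumset S T x :
  x \in sumset S T <-> exists s t, [/\ s \in S, t \in T & x = (s.1 + t.1, s.2 + t.2)].
Proof.
split; first by move=> /allpairsP [[s t] [/= Ss Tt ->]]; exists s, t.
by move=> [s [t [Ss Tt ->]]]; apply/allpairsP; exists (s, t).
Qed.

Lemma mem_degree_set n u v : ((u, v) \in degree_set n) = (u + v == n).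
Proof.
apply/mapP/eqP; first by move=> [t]; rewrite mem_iota => ? [-> ->]; lia.
by move=> uv; exists v; [rewrite mem_iota; lia | congr pair; lia].
Qed.

Lemma mem_c_exps i u v : ((u, v) \in c_exps i) = (u + v == i.*2.+1) && ((v == 0) || odd v).
Proof.
apply/mapP/andP.
  move=> [t Ht [-> ->]]; rewrite inE in Ht; case/orP: Ht => [/eqP ->|/mapP [j Hj ->]].
    by split=> //; apply/eqP; lia.
  by move: Hj; rewrite mem_iota /= odd_double => Hj; split=> //; apply/eqP; lia.
move=> [/eqP uv v_odd]; exists v; last by congr pair; lia.
case/orP: v_odd => [/eqP ->|v_odd]; first exact: mem_head.
rewrite inE; apply/orP; right; apply/mapP; exists v./2.
  by have := odd_double_half v; rewrite v_odd mem_iota => ?; lia.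
by rewrite -[LHS](odd_double_half v) v_odd add1n.
Qed.

Lemma sumset_degree m n : sumset (degree_set m) (degree_set n) =i degree_set (m + n).
Proof.
move=> [u v]; rewrite mem_degree_set; apply/idP/idP.
  move/mem_sumset => [[s1 s2] [[t1 t2] [+ + [-> ->]]]].
  by rewrite !mem_degree_set => /eqP ? /eqP ?; apply/eqP; lia.
move/eqP => uv; apply/mem_sumset.
exists (minn u m, m - minn u m), (u - minn u m, v - (m - minn u m)).
by rewrite !mem_degree_set; split; [apply/eqP; lia | apply/eqP; lia | congr pair => /=; lia].
Qed.

(* b_2 a_1^p = a_1^(p+2) for p >= 1, on exponents. *)
Lemma sumset_b_degree p : (1 <= p)%N -> sumset b_exps (degree_set p) =i degree_set (p + 2).
Proof.
move=> p1 [u v]; rewrite mem_degree_set; apply/idP/idP.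
  move/mem_sumset => [[s1 s2] [[t1 t2] [+ + [-> ->]]]].
  rewrite mem_degree_set !inE => /orP [/eqP [-> ->]|/eqP [-> ->]] /eqP ? /=; apply/eqP; lia.
move/eqP => uv; apply/mem_sumset; case: (leqP 2 u) => u2.
  exists (2, 0), (u - 2, v); rewrite mem_degree_set mem_head.
  by split=> //; [apply/eqP; lia | congr pair => /=; lia].
exists (0, 2), (u, v - 2); rewrite mem_degree_set !inE eqxx orbT.
by split=> //; [apply/eqP; lia | congr pair => /=; lia].
Qed.

(* c_(2i+1) a_1^p = a_1^(2i+1+p) for p >= 1, on exponents: a monomial of degree
   2i+1+p splits off a monomial of c_(2i+1) whose X2-exponent is 0 or odd. *)
Lemma sumset_c_degree i p : (1 <= p)%N ->
  sumset (c_exps i) (degree_set p) =i degree_set (i.*2.+1 + p).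
Proof.
move=> p1 [u v]; rewrite mem_degree_set; apply/idP/idP.
  move/mem_sumset => [[s1 s2] [[t1 t2] [+ + [-> ->]]]].
  by rewrite mem_c_exps mem_degree_set => /andP [/eqP ? _] /eqP ? /=; apply/eqP; lia.
move/eqP => uv; apply/mem_sumset.
set L := i.*2.+1 - u.
have [t [t_le t_u t_v t_odd]] : exists t, [/\ t <= i.*2.+1, i.*2.+1 - t <= u, t <= v
     & (t == 0) || odd t].
  case: (eqVneq L 0) => L0; first by exists 0; split=> //; lia.
  case L_odd: (odd L); first by exists L; split; rewrite ?L_odd ?orbT //; lia.
  have u0 : u != 0 by apply: contraFneq L_odd => u0; rewrite /L u0 subn0 /= odd_double.
  by exists L.+1; split; rewrite /= ?L_odd //; lia.
exists (i.*2.+1 - t, t), (u - (i.*2.+1 - t), v - t).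
by rewrite mem_c_exps t_odd andbT mem_degree_set; split; [apply/eqP; lia | apply/eqP; lia |
  congr pair => /=; lia].
Qed.

Section MonomialIdeals.
Variable R : idomainType.
Variables X1 X2 : R.
Hypotheses (X1_neq0 : X1 != 0%R) (X2_neq0 : X2 != 0%R).
Local Open Scope ring_scope.

Definition monomials (S : seq (nat * nat)) : seq R := [seq X1 ^+ e.1 * X2 ^+ e.2 | e <- S].

Definition is_monomial (I : ideal_monoid R) (S : seq (nat * nat)) : Prop :=
  proj1_sig I = ideal_gen (monomials S).

Lemma is_monomial_mop I J S T :
  is_monomial I S -> is_monomial J T -> is_monomial (mop I J) (sumset S T).
Proof.
rewrite /is_monomial ideal_monoid_mopE => -> ->; rewrite ideal_gen_mul.
apply: ideal_gen_eq_mem => z; apply/allpairsP/mapP.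
  move=> [[u v] [/= /mapP [s Ss ->] /mapP [t Tt ->] ->]].
  exists (s.1 + t.1, s.2 + t.2)%N; first by apply/allpairsP; exists (s, t).
  by rewrite /= !exprD mulrACA.
move=> [e /allpairsP [[s t] [/= Ss Tt ->]] ->].
exists (X1 ^+ s.1 * X2 ^+ s.2, X1 ^+ t.1 * X2 ^+ t.2).
by split=> /=; [exact: map_f | exact: map_f | rewrite !exprD mulrACA].
Qed.

Lemma is_monomial_eq_mem I S S' : is_monomial I S -> S =i S' -> is_monomial I S'.
Proof. by rewrite /is_monomial => -> E; apply/ideal_gen_eq_mem/eq_mem_map. Qed.

Lemma is_monomial_inj I J S : is_monomial I S -> is_monomial J S -> I = J.
Proof. by move=> HI HJ; apply: nzideal_eq; rewrite HI HJ. Qed.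

Lemma is_monomial_mone : is_monomial (@mone (ideal_monoid R)) (degree_set 0).
Proof.
apply: pred_ext => x; split=> // _; rewrite -(mulr1 x).
have [_ [_ IM]] := ideal_gen_is_ideal (monomials (degree_set 0)); apply: IM.
by apply: ideal_gen_mem; rewrite /= !expr0 mulr1 mem_seq1.
Qed.

Lemma monomial_ideal_nonzero (S : seq (nat * nat)) :
  S != [::] -> nonzero_ideal (ideal_gen (monomials S)).
Proof.
case: S => // e S _; split; first exact: ideal_gen_is_ideal.
exists (X1 ^+ e.1 * X2 ^+ e.2); split; first by apply: ideal_gen_mem; rewrite mem_head.
by rewrite mulf_neq0 // expf_neq0.
Qed.

Definition monomial_ideal (S : seq (nat * nat)) (S_neq0 : S != [::]) : ideal_monoid R :=
  exist _ _ (monomial_ideal_nonzero S_neq0).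

Definition ideal_a : ideal_monoid R := monomial_ideal (S := degree_set 1) isT.
Definition ideal_b : ideal_monoid R := monomial_ideal (S := b_exps) isT.
Definition ideal_c (i : nat) : ideal_monoid R := monomial_ideal (S := c_exps i) isT.

Lemma is_monomial_a : is_monomial ideal_a (degree_set 1). Proof. by []. Qed.
Lemma is_monomial_b : is_monomial ideal_b b_exps. Proof. by []. Qed.
Lemma is_monomial_c i : is_monomial (ideal_c i) (c_exps i). Proof. by []. Qed.

Lemma is_monomial_mpow_a n : is_monomial (mpow ideal_a n) (degree_set n).
Proof.
elim: n => [|n IH]; first exact: is_monomial_mone.
exact: is_monomial_eq_mem (is_monomial_mop is_monomial_a IH) (sumset_degree 1 n).
Qed.

Lemma b_mul_mpow_a p : (1 <= p)%N -> mop ideal_b (mpow ideal_a p) = mpow ideal_a (p + 2).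
Proof.
move=> p1; apply: is_monomial_inj (is_monomial_mpow_a _).
exact: is_monomial_eq_mem (is_monomial_mop is_monomial_b (is_monomial_mpow_a p))
  (sumset_b_degree p1).
Qed.

Lemma c_mul_mpow_a i p : (1 <= p)%N ->
  mop (ideal_c i) (mpow ideal_a p) = mpow ideal_a (i.*2.+1 + p).
Proof.
move=> p1; apply: is_monomial_inj (is_monomial_mpow_a _).
exact: is_monomial_eq_mem (is_monomial_mop (is_monomial_c i) (is_monomial_mpow_a p))
  (sumset_c_degree i p1).
Qed.

Lemma is_atom_of_gen g S (I : ideal_monoid R) :
  gen_is_atom g -> g = monomials S -> is_monomial I S -> is_atom I.
Proof.
move=> [A [EA atA]] gS IS; suff -> : I = A by [].
by apply: nzideal_eq; rewrite IS -gS; apply: pred_ext => x; rewrite EA.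
Qed.

Lemma a1_gensE : a1_gens X1 X2 = monomials (degree_set 1).
Proof. by rewrite /monomials /= expr0 expr1 mulr1 mul1r. Qed.

Lemma b2_gensE : b2_gens X1 X2 = monomials b_exps.
Proof. by rewrite /monomials /= expr0 mulr1 mul1r. Qed.

Lemma c_gensE i : c_gens X1 X2 i = monomials (c_exps i).
Proof. by rewrite /monomials /c_exps -map_comp. Qed.

Lemma a_cube : mop ideal_a (mop ideal_a ideal_a) = mop ideal_a ideal_b.
Proof.
have cm := ideal_monoid_cmonoid R.
have := b_mul_mpow_a (p := 1) isT.
by rewrite (mpow1 cm) (mpowS _ 2) (mpowS _ 1) (mpow1 cm) (mopC cm ideal_b) => ->.
Qed.

Lemma c_mul_a i : mop (ideal_c i) (mpow ideal_a 1) = mpow ideal_a i.*2.+2.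
Proof. by rewrite c_mul_mpow_a // addn1. Qed.

Lemma c_dvd_mpow_a i : divides (ideal_c i) (mpow ideal_a i.*2.+2).
Proof. by exists (mpow ideal_a 1); rewrite c_mul_a. Qed.

(* The ideals c_(2i+1) are pairwise distinct, because c_(2i+1) a_1 = a_1^(2i+2). *)
Lemma ideal_c_inj :
  unit_cancellative (ideal_monoid R) -> ~ is_unit ideal_a -> injective ideal_c.
Proof.
move=> ucanc nua i j Eij.
have /(mpow_inj (ideal_monoid_cmonoid R) ucanc nua) :
  mpow ideal_a i.*2.+2 = mpow ideal_a j.*2.+2 by rewrite -!c_mul_a Eij.
by move=> [/double_inj].
Qed.

Section LengthSpectrum.
Hypothesis atom_a : is_atom ideal_a.
Hypothesis atom_b : is_atom ideal_b.
Hypothesis atom_c : forall i, (1 <= i)%N -> is_atom (ideal_c i).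

(* a_1^(m+2j) = c_(2j+1) a_1^(m-1) is a product of m atoms. *)
Lemma lengths_mpow_a_even m j : (2 <= m)%N -> lengths (mpow ideal_a (m + j.*2)) m.
Proof.
have cm := ideal_monoid_cmonoid R.
case: j => [|j] m2; first by rewrite addn0; exact: lengths_mpow.
rewrite (_ : (m + j.+1.*2 = j.+1.*2.+1 + (m - 1))%N); last by lia.
rewrite -c_mul_mpow_a; last by lia.
have := lengths_mop cm (atom_c (ltn0Sn j)) (lengths_mpow cm (m - 1) atom_a).
by rewrite (_ : (m - 1).+1 = m) //; lia.
Qed.

(* a_1^(m+2j+1) = b_2 a_1^(m-1+2j) is a product of m atoms. *)
Lemma lengths_mpow_a_odd m j : (3 <= m)%N -> lengths (mpow ideal_a (m + j.*2.+1)) m.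
Proof.
move=> m3; have m1 : (2 <= m - 1)%N by lia.
have := lengths_mop (ideal_monoid_cmonoid R) atom_b (lengths_mpow_a_even j m1).
rewrite b_mul_mpow_a; last by lia.
have -> : (m - 1 + j.*2 + 2 = m + j.*2.+1)%N by lia.
by have -> : (m - 1).+1 = m by lia.
Qed.

Lemma lengths_mpow_a n m : ~~ odd n -> (2 <= m <= n)%N -> lengths (mpow ideal_a n) m.
Proof.
move=> n_even /andP [m2 mn].
have n_half := odd_double_half n; rewrite (negbTE n_even) add0n in n_half.
have gap := odd_double_half (n - m).
case: (odd (n - m)) gap => /= gap.
  have -> : n = (m + ((n - m)./2).*2.+1)%N by lia.
  by apply: lengths_mpow_a_odd; lia.
have -> : n = (m + ((n - m)./2).*2)%N by lia.
exact: lengths_mpow_a_even.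
Qed.
End LengthSpectrum.
End MonomialIdeals.

Unset Implicit Arguments.
Theorem lemma5p3 (R : idomainType) (X1 X2 : R) :
  X1 != 0%R -> X2 != 0%R -> X1 != X2 ->
  BF_monoid (ideal_monoid R) ->
  gen_is_atom (a1_gens X1 X2) ->
  gen_is_atom (b2_gens X1 X2) ->
  (forall i : nat, (1 <= i)%N -> gen_is_atom (c_gens X1 X2 i)) ->
  ~ transfer_Krull (ideal_monoid R) /\
  ~ locally_fin_gen (ideal_monoid R) /\
  (forall k : nat, (2 <= k)%N ->
     forall l : nat, Uk (ideal_monoid R) k l <-> (2 <= l)%N).
Proof.
move=> X1_neq0 X2_neq0 _ [ucanc _] gen_a gen_b gen_c.
have cm := ideal_monoid_cmonoid R; have reduced := @ideal_monoid_reduced R.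
have atom_a := is_atom_of_gen gen_a (a1_gensE X1 X2) (is_monomial_a X1_neq0 X2_neq0).
have atom_b := is_atom_of_gen gen_b (b2_gensE X1 X2) (is_monomial_b X1_neq0 X2_neq0).
have atom_c i (i1 : (1 <= i)%N) :=
  is_atom_of_gen (gen_c i i1) (c_gensE X1 X2 i) (is_monomial_c X1_neq0 X2_neq0 i).
split; first exact: not_transfer_Krull_of_cube atom_a atom_b (a_cube X1_neq0 X2_neq0).
split.
  apply: (not_locally_fin_gen_of_atoms cm reduced (c := fun j => ideal_c X1_neq0 X2_neq0 j.+1)).
  - by move=> i j /(ideal_c_inj ucanc (proj1 atom_a)) [].
  - by move=> j; exact: atom_c.
  - by move=> j; exists j.+1.*2.+2; exact: c_dvd_mpow_a.
move=> k k2 l; split; first by move=> [a [ak al]]; exact (lengths_ge2 cm reduced k2 ak al).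
move=> l2; exists (mpow (ideal_a X1_neq0 X2_neq0) (k + l).*2).
by split; apply: lengths_mpow_a => //; rewrite ?odd_double //; apply/andP; split=> //; lia.
Qed.
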